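(* Let $I\neq\emptyset$ and let $(I_j)_{j\in J}$ be a partition of $I$. For every $j\in J$ let $K_j\subseteq T^{I_j}$ be a compact set which is a set of uniqueness for $A(\overline{D}^{I_j})$. Then the compact set $K=\prod_{j\in J}K_j\subseteq\prod_{j\in J}T^{I_j}\equiv T^I$ is a set of uniqueness for $A(\overline{D}^I)$.
   Context: $\overline{D}=\{z\in\mathbb{C}:|z|\le1\}$, $T=\{z\in\mathbb{C}:|z|=1\}$, with product topologies on all products. For a non-empty set $S$, $A(\overline{D}^S)$ is the set of all functions $f:\overline{D}^S\to\mathbb{C}$ that are continuous and such that for every $s_0\in S$ and every $z\in\overline{D}^S$ the function of one variable obtained by varying only the coordinate $s_0$ (keeping the others equal to those of $z$) belongs to the disc algebra $A(\overline{D})$ (continuous on $\overline{D}$, holomorphic on the open disc). A compact set $K\subseteq T^S$ is a set of uniqueness for $A(\overline{D}^S)$ if any $f,g\in A(\overline{D}^S)$ with $f|_K=g|_K$ satisfy $f\equiv g$ on $\overline{D}^S$. *)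

From HB Require Import structures.
From mathcomp Require Import all_boot all_order all_algebra.
From mathcomp Require Import all_classical all_reals all_analysis.
From mathcomp Require Import complex.
Unset Printing Implicit Defensive.
Import Order.TTheory GRing.Theory Num.Theory.
Import numFieldTopology.Exports numFieldNormedType.Exports.
Local Open Scope classical_set_scope.
Local Open Scope ring_scope.

(* The complex numbers: C R := R[i] (mathcomp-real-closed's complex numbers
   over R : realType), seen as a numClosedFieldType so that mathcomp-analysis
   equips it with its norm topology (|.| is the complex modulus). *)
Definition C (R : realType) : numClosedFieldType := R[i].

Definition cdisc (R : realType) : set (C R) := [set z | `|z| <= 1].
Definition odisc (R : realType) : set (C R) := [set z | `|z| < 1].
Definition circ (R : realType) : set (C R) := [set z | `|z| = 1].

Definition polydisc (R : realType) (S : Type) : set {ptws S -> C R} :=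
  [set z | forall s, cdisc R (z s)].
Definition torus (R : realType) (S : Type) : set {ptws S -> C R} :=
  [set z | forall s, circ R (z s)].

Definition cdifferentiable (R : realType) (g : C R -> C R) (z0 : C R) :=
  exists l : C R, (fun h : C R => (g (z0 + h) - g z0) / h) @ (0 : C R)^' --> l.
Arguments cdifferentiable {R} g z0.

Definition disc_algebra (R : realType) (g : C R -> C R) :=
  {within cdisc R, continuous g} /\
  (forall z0, odisc R z0 -> cdifferentiable g z0).
Arguments disc_algebra {R} g.

Definition upd (R : realType) (S : Type) (z : S -> C R) (s0 : S) (w : C R)
  : {ptws S -> C R} := fun s => if `[< s = s0 >] then w else z s.
Arguments upd {R S} z s0 w.

(* A(Dbar^S) ; functions are total on S -> C but only their values on Dbar^S matter *)
Definition polydisc_algebra (R : realType) (S : Type)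
    (f : {ptws S -> C R} -> C R) :=
  {within polydisc R S, continuous f} /\
  (forall (s0 : S) (z : {ptws S -> C R}), polydisc R S z ->
     disc_algebra (fun w => f (upd z s0 w))).
Arguments polydisc_algebra {R S} f.

Definition uniqueness_set (R : realType) (S : Type) (K : set {ptws S -> C R}) :=
  forall f g : {ptws S -> C R} -> C R,
    polydisc_algebra f -> polydisc_algebra g ->
    (forall z, K z -> f z = g z) ->
    forall z, polydisc R S z -> f z = g z.
Arguments uniqueness_set {R S} K.

(* the block I_j = {i | p i = j} of the partition induced by p : I -> J *)
Definition block (I J : Type) (p : I -> J) (j : J) := {i : I | p i = j}.
Arguments block {I J} p j.

Definition restr (R : realType) (I J : Type) (p : I -> J) (j : J)
  (z : {ptws I -> C R}) : {ptws block p j -> C R} := fun i => z (proj1_sig i).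
Arguments restr {R I J} p j z.

Definition prodK (R : realType) (I J : Type) (p : I -> J)
  (K : forall j : J, set {ptws block p j -> C R}) : set {ptws I -> C R} :=
  [set z | forall j, K j (restr p j z)].

Arguments prodK {R I J p} K.

From HB Require Import structures.
From mathcomp Require Import all_boot all_order all_algebra.
From mathcomp Require Import all_classical all_reals all_analysis.
From mathcomp Require Import complex.
Import Order.TTheory GRing.Theory Num.Theory.
Import numFieldTopology.Exports numFieldNormedType.Exports.
Local Open Scope classical_set_scope.
Local Open Scope ring_scope.

(* If f = g on prod_j K_j, fix a point k of prod_j K_j (each K_j is nonempty,
   since 0 and 1 are distinct elements of A(Dbar^{I_j})).  Freezing all
   coordinates outside a block I_j turns f and g into elements of
   A(Dbar^{I_j}), so the uniqueness property of K_j frees one block at a time: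
   by induction f = g at every point of Dbar^I that agrees with k outside
   finitely many blocks.  These points converge to any z in Dbar^I in the
   product topology, and f, g are continuous on Dbar^I. *)

Section PointwiseTopology.
Variables (I : Type) (V : uniformType).

Lemma ptws_cvgP (F : set_system {ptws I -> V}) (FF : Filter F) (f : {ptws I -> V}) :
  F --> f <-> forall i, (fun g : {ptws I -> V} => g i) @ F --> f i.
Proof. exact: (@pointwise_cvgP (discrete_topology {classic I}) V F f FF). Qed.

Lemma continuous_coord (i : I) : continuous (fun g : {ptws I -> V} => g i).
Proof. by move=> g; exact: (proj1 (@ptws_cvgP (nbhs g) _ g) cvg_id i). Qed.

Lemma continuous_ptws (T : topologicalType) (h : T -> {ptws I -> V}) :
  (forall i, continuous (fun x => h x i)) -> continuous h.
Proof. by move=> hc x; apply/ptws_cvgP => i; exact: hc. Qed.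

End PointwiseTopology.

Lemma cvg_within_near {L : Type} {T : topologicalType} (F : set_system L)
    {FF : Filter F} (A : set T) (h : L -> T) (x : T) :
  (\forall l \near F, A (h l)) -> h @ F --> x -> h @ F --> within A (nbhs x).
Proof.
move=> FA hx B /hx hB; apply: filterS2 FA hB => l Ahl; exact.
Qed.

Lemma within_continuous_comp_into {T U V : topologicalType} (A : set T) (B : set U)
    (h : T -> U) (f : U -> V) :
  continuous h -> (forall x, A x -> B (h x)) -> {within B, continuous f} ->
  {within A, continuous (f \o h)}.
Proof.
move=> ch hAB /subspace_continuousP cf; apply/subspace_continuousP => x Ax.
apply: cvg_comp (cf _ (hAB _ Ax)).
apply: cvg_within_near; last exact: cvg_within_filter (ch x).
by apply: (within_nbhsW Ax) => y; exact: hAB.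
Qed.

Lemma within_continuous_eq_lim {L : Type} {T V : topologicalType}
    {F : set_system L} {PF : ProperFilter F} {A : set T} {f g : T -> V}
    {h : L -> T} {x : T} :
  hausdorff_space V -> {within A, continuous f} -> {within A, continuous g} ->
  A x -> (forall l, A (h l)) -> h @ F --> x -> f \o h = g \o h -> f x = g x.
Proof.
move=> hV /subspace_continuousP cf /subspace_continuousP cg Ax Ah hx fgh.
have hxA : h @ F --> within A (nbhs x) by apply: cvg_within_near => //; exact: nearW.
have f_lim : (f \o h) @ F --> f x := cvg_comp _ _ hxA (cf _ Ax).
have g_lim : (f \o h) @ F --> g x by rewrite fgh; exact: cvg_comp _ _ hxA (cg _ Ax).
exact: (@cvg_unique V hV _ (fmap_proper_filter (f \o h) PF) _ _ f_lim g_lim).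
Qed.

Definition finite_lists (J : eqType) : set_system (seq J) :=
  filter_from setT (fun s : seq J => [set l : seq J | {subset s <= l}]).

#[global] Instance finite_lists_proper (J : eqType) : ProperFilter (finite_lists J).
Proof.
apply: filter_from_proper => [|s _]; last by exists s.
apply: filter_from_filter; first by exists [::].
move=> s1 s2 _ _; exists (s1 ++ s2) => // l sub12.
by split=> j js; apply: sub12; rewrite mem_cat js ?orbT.
Qed.

Lemma torus_sub_polydisc {R : realType} {S : Type} : torus R S `<=` polydisc R S.
Proof. by move=> z Tz s; rewrite /cdisc /= (Tz s). Qed.

Lemma polydisc_algebra_cst (R : realType) (S : Type) (c : C R) :
  polydisc_algebra (fun _ : {ptws S -> C R} => c).
Proof.
split=> [|s0 z _]; first exact/continuous_subspaceT/cst_continuous.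
split=> [|z0 _]; first exact/continuous_subspaceT/cst_continuous.
exists 0; apply: cvg_near_cst; apply: nearW => h.
by rewrite subrr mul0r.
Qed.

Lemma uniqueness_set_neq0 {R : realType} {S : Type} {K : set {ptws S -> C R}} :
  uniqueness_set K -> K !=set0.
Proof.
move=> uK; apply/set0P/negP => /eqP K0.
have disc0 : polydisc R S (fun _ => 0) by move=> s; rewrite /cdisc /= normr0 ler01.
have /eqP : (0 : C R) = 1.
  apply: (uK _ _ (polydisc_algebra_cst R S 0) (polydisc_algebra_cst R S 1) _ _ disc0).
  by rewrite K0.
by rewrite eq_sym oner_eq0.
Qed.

Lemma continuous_restr {R : realType} {I J : Type} (p : I -> J) (j : J) :
  continuous (restr (R:=R) p j).
Proof. by apply: continuous_ptws => -[i pij]; exact: continuous_coord. Qed.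

Section Gluing.
Context {R : realType} {I J : Type} (p : I -> J) (j : J).

Definition glue (u : {ptws block p j -> C R}) (w : {ptws I -> C R}) :
    {ptws I -> C R} :=
  fun i => match pselect (p i = j) with
           | left pij => u (exist _ i pij)
           | right _ => w i
           end.

Lemma restr_glue u w : restr p j (glue u w) = u.
Proof.
apply: funext => -[i pij]; rewrite /restr /glue /=.
by case: pselect => [pij'|//]; rewrite (Prop_irrelevance pij' pij).
Qed.

Lemma restr_glue_neq j' u w : j' <> j -> restr p j' (glue u w) = restr p j' w.
Proof.
move=> j'j; apply: funext => -[i pij']; rewrite /restr /glue /=.
by case: pselect => [pij|//]; exfalso; apply: j'j; rewrite -pij -pij'.
Qed.

Lemma glue_restr w : glue (restr p j w) w = w.
Proof. by apply: funext => i; rewrite /glue /restr; case: pselect. Qed.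

Lemma glue_upd u w (s0 : block p j) x :
  glue (upd u s0 x) w = upd (glue u w) (proj1_sig s0) x.
Proof.
apply: funext => i; rewrite /glue /upd.
case: pselect => [pij|pij].
  case: (asboolP (exist _ i pij = s0)) => [is0|is0];
    case: (asboolP (i = proj1_sig s0)) => [i_s0|i_s0] //.
  - by exfalso; apply: i_s0; rewrite -is0.
  - exfalso; apply: is0; move: pij; rewrite i_s0 => pij.
    by case: s0 {i_s0} pij => i0 pi0 pij /=; rewrite (Prop_irrelevance pij pi0).
case: (asboolP (i = proj1_sig s0)) => [i_s0|//].
by exfalso; apply: pij; rewrite i_s0; exact: (proj2_sig s0).
Qed.

Lemma polydisc_glue u w :
  polydisc R _ u -> polydisc R _ w -> polydisc R _ (glue u w).
Proof. by move=> Pu Pw i; rewrite /glue; case: pselect. Qed.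

Lemma continuous_glue w : continuous (glue^~ w).
Proof.
apply: continuous_ptws => i; rewrite /glue.
by case: pselect => pij; [exact: continuous_coord | exact: cst_continuous].
Qed.

Lemma polydisc_algebra_glue {w} {f : {ptws I -> C R} -> C R} :
  polydisc R I w -> polydisc_algebra f -> polydisc_algebra (fun u => f (glue u w)).
Proof.
move=> Pw [fc fs]; split.
  apply: (within_continuous_comp_into _ (polydisc R I) _ f (continuous_glue w) _ fc).
  by move=> u Pu; exact: polydisc_glue.
move=> s0 z Pz; under eq_fun do rewrite glue_upd.
exact/fs/polydisc_glue.
Qed.

End Gluing.

Section ProductSet.
Context {R : realType} {I J : Type} {p : I -> J} {K : forall j, set {ptws block p j -> C R}}.

Lemma prodK_sub_torus :
  (forall j, K j `<=` torus R (block p j)) -> prodK K `<=` torus R I.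
Proof. by move=> K_sub z Kz i; exact: (K_sub _ _ (Kz (p i)) (exist _ i erefl)). Qed.

Lemma compact_prodK : (forall j, compact (K j)) -> compact (prodK K).
Proof.
move=> K_compact.
pose A i := (fun u : {ptws block p (p i) -> C R} => u (exist _ i erefl)) @` K (p i).
apply: (@subclosed_compact _ _ [set z : {ptws I -> C R} | forall i, A i (z i)]).
- have -> : prodK K = \bigcap_(j in setT) (restr p j @^-1` K j).
    by apply/seteqP; split=> [z Kz j _|z Kz j]; exact: Kz.
  apply: closed_bigI => j _; apply: preimage_closed => [z _|]; first exact: continuous_restr.
  apply: compact_closed (K_compact j).
  by apply: (@hausdorff_product {classic _} (fun=> C R)) => _; exact: norm_hausdorff.
- apply: (@tychonoff {classic I} (fun=> C R)) => i.
  apply: continuous_compact (K_compact (p i)).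
  exact/continuous_subspaceT/continuous_coord.
- by move=> z Kz i; exists (restr p (p i) z) => //; exact: Kz.
Qed.

Lemma prodK_neq0 : (forall j, K j !=set0) -> prodK K !=set0.
Proof.
move=> K_neq0; pose k j := projT1 (cid (K_neq0 j)).
exists (fun i => k (p i) (exist _ i erefl)) => j.
suff -> : restr p j (fun i => k (p i) (exist _ i erefl)) = k j.
  exact: projT2 (cid (K_neq0 j)).
by apply: funext => -[i pij]; rewrite /restr /=; case: j / pij.
Qed.

End ProductSet.

Section Patch.
Context {R : realType} {I J : Type} (p : I -> J).

Definition patch (z k : {ptws I -> C R}) (s : seq {classic J}) : {ptws I -> C R} :=
  fun i => if p i \in s then z i else k i.

Lemma polydisc_patch z k s :
  polydisc R I z -> polydisc R I k -> polydisc R I (patch z k s).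
Proof. by move=> Pz Pk i; rewrite /patch; case: ifP. Qed.

Lemma restr_patch_notin z k (s : seq {classic J}) (j : {classic J}) :
  j \notin s -> restr p j (patch z k s) = restr p j k.
Proof.
move=> js; apply: funext => -[i pij]; rewrite /restr /patch /= pij.
by rewrite (negbTE js).
Qed.

Lemma patch_cvg z k : patch z k @ finite_lists _ --> z.
Proof.
apply/ptws_cvgP => i B Bzi; exists [:: p i] => // s /(_ (p i)) /=.
rewrite mem_head => /(_ isT) pis.
by rewrite /patch pis; exact: nbhs_singleton.
Qed.

End Patch.

Section FiniteBlocks.
Context {R : realType} {I J : Type} {p : I -> J} {K : forall j, set {ptws block p j -> C R}}.
Hypothesis K_sub : forall j, K j `<=` torus R (block p j).
Hypothesis K_uniq : forall j, uniqueness_set (K j).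
Context {f g : {ptws I -> C R} -> C R}.
Hypotheses (f_alg : polydisc_algebra f) (g_alg : polydisc_algebra g).
Hypothesis fg_K : forall z, prodK K z -> f z = g z.

Lemma eq_outside_finite_blocks (s : seq {classic J}) (w : {ptws I -> C R}) :
  polydisc R I w -> (forall j : {classic J}, j \notin s -> K j (restr p j w)) -> f w = g w.
Proof.
elim: s w => [|j s IHs] w Pw Kw; first by apply: fg_K => j; exact: Kw.
have fg_Kj u : K j u -> f (glue p j u w) = g (glue p j u w).
  move=> Ku; apply: IHs.
    exact/polydisc_glue/Pw/torus_sub_polydisc/K_sub/Ku.
  move=> j' j's; have [-> | j'j] := pselect (j' = j); first by rewrite restr_glue.
  rewrite restr_glue_neq //; apply: Kw.
  by rewrite !inE negb_or j's andbT; apply/eqP.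
have Prw : polydisc R _ (restr p j w) by move=> i; exact: Pw.
have := K_uniq j _ _ (polydisc_algebra_glue p j Pw f_alg)
  (polydisc_algebra_glue p j Pw g_alg) fg_Kj _ Prw.
by rewrite /= glue_restr.
Qed.

End FiniteBlocks.

Theorem proposition3p8 (R : realType) (I J : Type) (p : I -> J)
    (I_nonempty : exists i : I, True)
    (blocks_nonempty : forall j : J, exists i : I, p i = j)
    (K : forall j : J, set {ptws block p j -> C R})
    (K_sub : forall j, K j `<=` torus R (block p j))
    (K_compact : forall j, compact (K j))
    (K_uniq : forall j, uniqueness_set (K j)) :
  prodK K `<=` torus R I /\ compact (prodK K) /\ uniqueness_set (prodK K).
Proof.
have prodK_torus := prodK_sub_torus K_sub.
split=> //; split; first exact: compact_prodK.
move=> f g f_alg g_alg fg_K z Pz.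
have [k Kk] := prodK_neq0 (fun j => uniqueness_set_neq0 (K_uniq j)).
have Pk : polydisc R I k by exact/torus_sub_polydisc/prodK_torus.
apply: (within_continuous_eq_lim _ f_alg.1 g_alg.1 Pz _ (patch_cvg p z k)).
- exact: norm_hausdorff.
- by move=> s; exact: polydisc_patch.
apply: funext => s /=; apply: (eq_outside_finite_blocks K_sub K_uniq f_alg g_alg fg_K s).
  exact: polydisc_patch.
by move=> j js; rewrite restr_patch_notin //; exact: Kk.
Qed.
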